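(* Let $q$ be a prime power, $n \le m$, and let $\mathcal G(n,k)$ be a Gabidulin code of length $n$ and dimension $k$ over $\mathbb F_{q^m}$ with minimum rank distance $d = n-k+1$. Let $\tau < d$. Then for every $\mathbf r \in \mathbb F_{q^m}^n$, and hence for $\ell = \max_{\mathbf r \in \mathbb F_{q^m}^n} |\mathcal B_\tau(\mathbf r) \cap \mathcal G(n,k)|$, $$\ell \le \sum_{t = \lfloor (d-1)/2\rfloor + 1}^{\tau} \frac{\left[\begin{smallmatrix} n \\ 2t+1-d\end{smallmatrix}\right]_q}{\left[\begin{smallmatrix} t \\ 2t+1-d\end{smallmatrix}\right]_q} \le 4 \sum_{t = \lfloor (d-1)/2\rfloor + 1}^{\tau} q^{(2t-d+1)(n-t)} \le 4\left(\tau - \left\lfloor \tfrac{d-1}{2}\right\rfloor\right) q^{(2\tau - d+1)(n - \lfloor (d-1)/2\rfloor - 1)}.$$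
   Context: A linearized polynomial over $\mathbb F_{q^m}$ is $f(x) = \sum_{i} f_i x^{q^i}$ with $f_i \in \mathbb F_{q^m}$; its $q$-degree is the largest $i$ with $f_i \neq 0$. The Gabidulin code $\mathcal G(n,k)$ is $\{(f(\alpha_0), \dots, f(\alpha_{n-1})) : \deg_q f < k\}$ for fixed $\alpha_0,\dots,\alpha_{n-1} \in \mathbb F_{q^m}$ linearly independent over $\mathbb F_q$. Fixing a basis of $\mathbb F_{q^m}$ over $\mathbb F_q$, each $\mathbf x \in \mathbb F_{q^m}^n$ corresponds to a matrix in $\mathbb F_q^{m\times n}$, and $\mathrm{rank}(\mathbf x)$ is its $\mathbb F_q$-rank. Its minimum rank distance is $d=n-k+1$. $\mathcal B_\tau(\mathbf r)$ is the set of $\mathbf x \in \mathbb F_{q^m}^n$ with $\mathrm{rank}(\mathbf x - \mathbf r) \le \tau$. The Gaussian binomial is $\left[\begin{smallmatrix} n \\ s\end{smallmatrix}\right]_q = \prod_{i=0}^{s-1}\frac{q^n-q^i}{q^s-q^i}$. *)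

From HB Require Import structures.
From mathcomp Require Import all_boot all_order all_algebra all_field.
Set Implicit Arguments. Unset Strict Implicit. Unset Printing Implicit Defensive.
Import Order.TTheory GRing.Theory Num.Theory.
Local Open Scope ring_scope.

(* F_q = K (a finite field with q elements), F_{q^m} = L, an extension of K
   of degree m = \dim {:L}. *)
Section Gabidulin.
Variables (K : finFieldType) (L : fieldExtType K).

(* Evaluation of the linearized polynomial sum_i f_i x^{q^i}, coefficient
   list f = [f_0; ...; f_{k-1}] (so q-degree < size f). *)
Definition linpoly_eval (q : nat) (f : seq L) (x : L) : L :=
  \sum_(i < size f) f`_i * x ^+ (q ^ i).

Definition gabidulin_codeword (q n k : nat) (alpha : 'I_n -> L) (c : 'rV[L]_n)
  : Prop :=
  exists f : seq L, size f = k /\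
    c = \row_(j < n) linpoly_eval q f (alpha j).

Definition rank_q (n : nat) (x : 'rV[L]_n) : nat :=
  \rank (\matrix_(i < \dim {:L}, j < n) coord (vbasis fullv) i (x 0 j)).

End Gabidulin.

Definition gauss_binom (q n s : nat) : rat :=
  \prod_(i < s) (((q ^ n)%:R - (q ^ i)%:R) / ((q ^ s)%:R - (q ^ i)%:R)).

(* Expand vectors of F_{q^m}^n over a basis of F_{q^m}/F_q to
   m x n matrices over F_q.  A nonzero linearized polynomial of q-degree < k
   has at most q^(k-1) roots, and the F_q-span of the alpha_j has q^n
   elements, so a nonzero codeword has rank at least n - k + 1 = d.
   If rank(c - r) <= t < d, enlarge the row space of c - r to a
   t-dimensional subspace U_c of F_q^n.  For distinct codewords,
   d <= rank(c - c') <= dim (U_c + U_c'), so U_c and U_c' meet in dimension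
   at most 2t - d; hence the sets of row-free (2t+1-d) x n matrices with rows
   in U_c are pairwise disjoint, and counting them bounds the number of such
   codewords by [n, 2t+1-d]_q / [t, 2t+1-d]_q.  Summing over the shells
   t = max(rank(c - r), e+1) gives the first bound; the estimates
   q^(s(t-s)) <= [t, s]_q <= 4 q^(s(t-s)) give the other two. *)

From HB Require Import structures.
From mathcomp Require Import all_boot all_order all_algebra all_field all_solvable.
From mathcomp Require Import zify ring lra.
Set Implicit Arguments. Unset Strict Implicit. Unset Printing Implicit Defensive.
Import Order.TTheory GRing.Theory Num.Theory.
Local Open Scope ring_scope.

Section RowSpaceCounting.
Variable F : finFieldType.
Local Notation q := #|F|.

Lemma card_submx m n (V : 'M[F]_(m, n)) :
  #|[set v : 'rV[F]_n | (v <= V)%MS]| = (q ^ \rank V)%N.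
Proof.
have [B BK] := row_freeP (row_base_free V).
have -> : [set v : 'rV[F]_n | (v <= V)%MS] = [set w *m row_base V | w in 'rV_(\rank V)].
  apply/setP => v; rewrite inE -(eq_row_base V); apply/submxP/imsetP => [[w ->]|[w _ ->]];
    by exists w.
rewrite card_imset ?card_mx ?mul1n //.
by apply: (can_inj (g := mulmx^~ B)) => w; rewrite -mulmxA BK mulmx1.
Qed.

Lemma row_free_col_mx m n (v : 'rV[F]_n) (U : 'M[F]_(m, n)) :
  row_free (col_mx v U) = row_free U && ~~ (v <= U)%MS.
Proof.
rewrite /row_free -addsmxE.
have [le_U_vU] := mxrank_leqif_sup (addsmxSr v U).
rewrite addsmx_sub submx_refl andbT => eq_U_vU.
have le_vU_U : (\rank (v + U) <= 1 + \rank U)%N.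
  by apply: leq_trans (mxrank_adds_leqif v U) _; rewrite leq_add2r rank_leq_row.
have := rank_leq_row U; case: (v <= U)%MS eq_U_vU => /eqP; lia.
Qed.

Lemma card_row_free m n : (m <= n)%N ->
  #|[set A : 'M[F]_(m, n) | row_free A]| = (\prod_(i < m) (q ^ n - q ^ i))%N.
Proof.
elim: m => [_ | m IHm lt_mn].
  rewrite big_ord0 (@eq_card1 _ (0 : 'M[F]_(0, n))) // => A.
  by rewrite !inE flatmx0 eqxx /row_free mxrank0.
rewrite big_ord_recr -IHm; last exact: ltnW.
rewrite -[LHS]sum1_card.
rewrite (reindex (fun p : 'M[F]_(m, n) * 'rV[F]_n => col_mx p.2 p.1)); last first.
  exists (fun A : 'M_(1 + m, n) => (dsubmx A, usubmx A)) => [[U v] _ | A _].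
    by rewrite col_mxKd col_mxKu.
  exact: vsubmxK.
under eq_bigl => p do rewrite inE row_free_col_mx.
rewrite -(pair_big_dep (fun U : 'M[F]_(m, n) => row_free U)
  (fun U v => ~~ (v <= U)%MS) (fun _ _ => 1%N)).
rewrite -[RHS]/(#|[set U : 'M[F]_(m, n) | row_free U]| * (q ^ n - q ^ m))%N.
rewrite -sum_nat_const.
apply: eq_big => [U | U rfU]; first by rewrite inE.
rewrite sum1dep_card.
have -> : [set v : 'rV[F]_n | ~~ (v <= U)%MS] = ~: [set v | (v <= U)%MS].
  by apply/setP => v; rewrite !inE.
by rewrite cardsCs setCK card_submx card_mx mul1n (eqP rfU).
Qed.

Lemma card_row_free_submx s m n (U : 'M[F]_(m, n)) :
  #|[set A : 'M[F]_(s, n) | row_free A && (A <= U)%MS]|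
  = #|[set B : 'M[F]_(s, \rank U) | row_free B]|.
Proof.
have [C CK] := row_freeP (row_base_free U).
have -> : [set A : 'M[F]_(s, n) | row_free A && (A <= U)%MS]
    = [set B *m row_base U | B in [set B : 'M_(s, \rank U) | row_free B]].
  apply/setP => A; rewrite inE -(eq_row_base U); apply/andP/imsetP.
    by case=> rfA /submxP [B defA]; exists B; rewrite // inE defA in rfA *;
      rewrite /row_free mxrankMfree ?row_base_free in rfA.
  case=> B; rewrite inE => rfB ->.
  by rewrite submxMl /row_free mxrankMfree ?row_base_free.
rewrite card_imset //.
by apply: (can_inj (g := mulmx^~ C)) => B; rewrite -mulmxA CK mulmx1.
Qed.

Lemma exists_submx_rank m n (R : 'M[F]_(m, n)) t : (\rank R <= t <= n)%N ->
  exists V : 'M[F]_n, (R <= V)%MS /\ \rank V = t.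
Proof.
elim: t => [|t IHt] /andP [le_R_t le_t_n].
  by exists <<R>>%MS; rewrite genmxE mxrank_gen; split=> //; lia.
have [eq_R_t | lt_R_t] := eqVneq (\rank R) t.+1.
  by exists <<R>>%MS; rewrite genmxE mxrank_gen.
have [V [RV rkV]] : exists V : 'M[F]_n, (R <= V)%MS /\ \rank V = t.
  by apply: IHt; apply/andP; split; lia.
have : (0 < \rank V^C)%N by rewrite mxrank_compl rkV subn_gt0.
rewrite lt0n mxrank_eq0 => /rowV0Pn [v vVC nz_v].
exists (V + v)%MS; split; first exact: submx_trans RV (addsmxSl V v).
have cap0 : \rank (V :&: v)%MS = 0%N.
  apply/eqP; rewrite mxrank_eq0 -submx0 -(capmx_compl V).
  exact: capmxS.
by have := mxrank_sum_cap V v; rewrite cap0 rkV rank_rV nz_v; lia.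
Qed.

Lemma card_bigcup_seq_disjoint (I : eqType) (T : finType) (l : seq I)
    (X : I -> {set T}) :
  uniq l -> {in l &, forall i j, i != j -> [disjoint X i & X j]} ->
  #|\bigcup_(i <- l) X i| = (\sum_(i <- l) #|X i|)%N.
Proof.
elim: l => [|i l IHl]; first by rewrite !big_nil cards0.
rewrite cons_uniq => /andP [il ul] dis.
rewrite !big_cons cardsU -IHl //; last first.
  by move=> a b al bl; apply: dis; rewrite inE ?al ?bl orbT.
suff -> : X i :&: \bigcup_(j <- l) X j = set0 by rewrite cards0 subn0.
apply/eqP; rewrite big_seq.
apply: (big_ind (fun S => X i :&: S == set0)) => [|A B|j jl].
- by rewrite setI0.
- by rewrite setIUr setU_eq0 => -> ->.
- rewrite setI_eq0 dis ?mem_head ?inE ?jl ?orbT //.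
  by apply: contraNneq il => ->.
Qed.

Lemma subspace_packing n (I : eqType) (l : seq I) (U : I -> 'M[F]_n) s t :
  uniq l -> (s <= t <= n)%N -> {in l, forall i, \rank (U i) = t} ->
  {in l &, forall i j, i != j -> \rank (U i :&: U j)%MS < s}%N ->
  (size l * \prod_(i < s) (q ^ t - q ^ i) <= \prod_(i < s) (q ^ n - q ^ i))%N.
Proof.
move=> ul /andP [le_s_t le_t_n] rkU capU.
pose X i := [set A : 'M[F]_(s, n) | row_free A && (A <= U i)%MS].
have cardX : {in l, forall i, #|X i| = \prod_(j < s) (q ^ t - q ^ j)}%N.
  by move=> i il; rewrite card_row_free_submx card_row_free rkU.
have disX : {in l &, forall i j, i != j -> [disjoint X i & X j]}.
  move=> i j il jl neq_ij; rewrite -setI_eq0; apply/eqP/setP => A.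
  rewrite !inE; apply/negbTE/negP => /andP [/andP [rfA AUi] /andP [_ AUj]].
  have := capU i j il jl neq_ij; rewrite -(eqP rfA) ltnNge.
  by rewrite mxrankS // sub_capmx AUi AUj.
have sub : \bigcup_(i <- l) X i \subset [set A : 'M[F]_(s, n) | row_free A].
  rewrite big_seq.
  apply: (big_ind (fun S : {set 'M[F]_(s, n)} => S \subset [set A | row_free A]))
    => [|A B sA sB|i _].
  - exact: sub0set.
  - by rewrite subUset sA.
  - by apply/subsetP => A; rewrite !inE => /andP [].
rewrite -(@card_row_free s n) ?(leq_trans le_s_t) //.
apply: leq_trans (subset_leq_card sub).
rewrite card_bigcup_seq_disjoint // (eq_big_seq _ cardX).
by rewrite -sum1_size big_distrl /= mul1n.
Qed.

End RowSpaceCounting.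

Section LinearizedPolynomials.
Variables (K : finFieldType) (L : fieldExtType K).
Local Notation q := #|K|.

Lemma expf_cardX (a : K) i : a ^+ (q ^ i) = a.
Proof. by elim: i => [|i IHi]; rewrite ?expr1 // expnS exprM expf_card. Qed.

Lemma pchar_cardX_nat i : [pchar L].-nat (q ^ i)%N.
Proof.
have [p p_pr pcharKp] := finPcharP K.
have : p.-nat q.
  by have := abelem_pgroup (fin_ring_pchar_abelem pcharKp); rewrite /pgroup cardsT.
rewrite pnatX => /sub_in_pnat-> // r _; rewrite inE => /eqP ->.
by rewrite (pchar_lalg L p).
Qed.

Lemma exprZD_cardX (a : K) (x y : L) i :
  (a *: x + y) ^+ (q ^ i) = a *: x ^+ (q ^ i) + y ^+ (q ^ i).
Proof. by rewrite exprDn_pchar ?pchar_cardX_nat // exprZn expf_cardX. Qed.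

Variable f : seq L.

Lemma linpoly_evalZD (a : K) (x y : L) :
  linpoly_eval q f (a *: x + y) = a *: linpoly_eval q f x + linpoly_eval q f y.
Proof.
rewrite /linpoly_eval scaler_sumr -big_split; apply: eq_bigr => i _ /=.
by rewrite exprZD_cardX mulrDr scalerAr.
Qed.

Lemma linpoly_eval0 : linpoly_eval q f 0 = 0.
Proof.
have q_gt0 i : (0 < q ^ i)%N by rewrite expn_gt0 (ltnW (card_finNzRing_gt1 K)).
by apply: big1 => i _; rewrite expr0n eqn0Ngt q_gt0 mulr0.
Qed.

Lemma linpoly_eval_sum n (v : 'I_n -> K) (x : 'I_n -> L) :
  linpoly_eval q f (\sum_j v j *: x j) = \sum_j v j *: linpoly_eval q f (x j).
Proof.
elim/big_rec2: _ => [|j y z _ <-]; first exact: linpoly_eval0.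
by rewrite linpoly_evalZD.
Qed.

Definition linpoly : {poly L} := \sum_(i < size f) f`_i *: 'X^(q ^ i).

Lemma horner_linpoly x : linpoly.[x] = linpoly_eval q f x.
Proof.
by rewrite horner_sum; apply: eq_bigr => i _; rewrite hornerZ hornerXn.
Qed.

Lemma size_linpoly : (size linpoly <= (q ^ (size f).-1).+1)%N.
Proof.
apply: leq_trans (size_sum _ _ _) _; apply/bigmax_leqP => i _.
apply: leq_trans (size_scale_leq _ _) _.
rewrite size_polyXn ltnS leq_pexp2l ?(ltnW (card_finNzRing_gt1 K)) //.
by have := ltn_ord i; lia.
Qed.

End LinearizedPolynomials.

Section RankDistance.
Variables (K : finFieldType) (L : fieldExtType K) (n : nat).
Local Notation q := #|K|.

Definition coord_mx (x : 'rV[L]_n) : 'M[K]_(\dim {:L}, n) :=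
  \matrix_(i < \dim {:L}, j < n) coord (vbasis fullv) i (x 0 j).

Lemma coord_mxB (x y : 'rV[L]_n) : coord_mx (x - y) = coord_mx x - coord_mx y.
Proof. by apply/matrixP => i j; rewrite !mxE linearB. Qed.

Lemma kermx_coord_mx (c : 'rV[L]_n) (v : 'rV[K]_n) :
  (v <= kermx (coord_mx c)^T)%MS = (\sum_j v 0 j *: c 0 j == 0).
Proof.
rewrite sub_kermx; set y := \sum_j _.
have coord_y i : (v *m (coord_mx c)^T) 0 i = coord (vbasis fullv) i y.
  rewrite /y linear_sum mxE; under eq_bigr => j _ do rewrite !mxE.
  by under [RHS]eq_bigr => j _ do rewrite linearZ.
apply/eqP/eqP => [vc0 | y0]; last first.
  by apply/rowP => i; rewrite coord_y y0 linear0 mxE.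
rewrite (coord_vbasis (memvf y)); apply: big1 => i _.
by rewrite -coord_y vc0 mxE scale0r.
Qed.

Variables (alpha : 'I_n -> L).
Hypothesis alpha_free : free [seq alpha i | i <- enum 'I_n].

Definition comb_alpha (v : 'rV[K]_n) : L := \sum_j v 0 j *: alpha j.

Lemma comb_alpha_inj : injective comb_alpha.
Proof.
move=> v w eq_vw; apply/rowP => j; apply/eqP; rewrite -subr_eq0; apply/eqP.
(* The sequence of the alpha_j is convertible to a tuple, as [freeP] requires. *)
have /freeP free_alpha : free (map_tuple alpha (ord_tuple n)) by [].
apply: (free_alpha (fun j => v 0 j - w 0 j)).
rewrite -[RHS](subrr (comb_alpha w)) -{1}eq_vw /comb_alpha -sumrB.
under eq_bigr => i _ do rewrite -tnth_nth tnth_map tnth_ord_tuple.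
by under [RHS]eq_bigr => i _ do rewrite -scalerBl.
Qed.

Lemma rank_q_linpoly_eval (f : seq L) (c : 'rV[L]_n) :
  (size f <= n)%N -> c = \row_j linpoly_eval q f (alpha j) -> c != 0 ->
  (n - size f + 1 <= rank_q c)%N.
Proof.
move=> le_f_n def_c nz_c.
have nz_P : linpoly f != 0.
  apply: contra nz_c => /eqP P0; apply/eqP/rowP => j.
  by rewrite def_c !mxE -horner_linpoly P0 horner0.
have f_gt0 : (0 < size f)%N.
  by rewrite lt0n; apply: contra nz_P => /nilP f0; rewrite /linpoly f0 big_ord0.
set V := kermx (coord_mx c)^T.
set roots := [seq comb_alpha v | v <- enum [set v : 'rV[K]_n | (v <= V)%MS]].
have rootsP : all (root (linpoly f)) roots.
  apply/allP => _ /mapP [v + ->]; rewrite mem_enum inE kermx_coord_mx => /eqP vc0.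
  rewrite /root horner_linpoly linpoly_eval_sum -[X in _ == X]vc0.
  by apply/eqP/eq_bigr => j _; rewrite def_c mxE.
have uniq_roots : uniq roots.
  by rewrite map_inj_uniq ?enum_uniq //; exact: comb_alpha_inj.
have := leq_trans (max_poly_roots nz_P rootsP uniq_roots) (size_linpoly f).
rewrite size_map -cardE card_submx ltnS leq_exp2l ?card_finNzRing_gt1 //.
rewrite mxrank_ker mxrank_tr.
have := rank_leq_col (coord_mx c); rewrite /rank_q -/(coord_mx c); lia.
Qed.

Lemma gabidulin_rank_dist k (c c' : 'rV[L]_n) : (k <= n)%N ->
  gabidulin_codeword q k alpha c -> gabidulin_codeword q k alpha c' -> c != c' ->
  (n - k + 1 <= rank_q (c - c'))%N.
Proof.
move=> le_k_n [f [size_f ->]] [f' [size_f' ->]] neq_cc'.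
pose g := mkseq (fun i => f`_i - f'`_i) k.
have -> : k = size g by rewrite size_mkseq.
apply: rank_q_linpoly_eval; rewrite ?subr_eq0 ?size_mkseq //.
apply/rowP => j; rewrite !mxE /linpoly_eval size_mkseq size_f size_f' -sumrB.
by apply: eq_bigr => i _; rewrite nth_mkseq // mulrBl.
Qed.

End RankDistance.

Section GaussianBounds.
Variable R : realFieldType.
Implicit Types x z : R.

Lemma frac_step_le x z : 2 <= x -> 1 <= z ->
  4 * (z - 1) / z * (x * z / (x * z - 1)) <= 4 * (x * z - 1) / (x * z).
Proof.
move=> x_ge2 z_ge1.
have xz_gt1 : 1 < x * z by nra.
rewrite -subr_ge0.
have -> : 4 * (x * z - 1) / (x * z) - 4 * (z - 1) / z * (x * z / (x * z - 1))
    = 4 * (x * z * (x - 2) + 1) / (x * z * (x * z - 1)).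
  by field; apply/and3P; split; apply/negbT/gt_eqF; nra.
by apply: divr_ge0; nra.
Qed.

(* The product of the 1 / (1 - x^-j), j <= s; the bound 4 (1 - x^-s), rather
   than 4, is what makes the induction go through. *)
Lemma prod_expr_frac_le x s : 2 <= x -> (0 < s)%N ->
  \prod_(i < s) (x ^+ i.+1 / (x ^+ i.+1 - 1)) <= 4 * (x ^+ s - 1) / x ^+ s.
Proof.
move=> x_ge2; elim: s => // s IHs _; rewrite big_ord_recr /=.
case: s IHs => [_ | s IHs].
  rewrite big_ord0 mul1r expr1 ler_pdivrMr; last by lra.
  by rewrite mulrAC ler_pdivlMr; nra.
have z_ge1 : 1 <= x ^+ s.+1 by rewrite exprn_ege1 //; lra.
have frac_ge0 : 0 <= x ^+ s.+2 / (x ^+ s.+2 - 1).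
  by rewrite divr_ge0 ?subr_ge0 ?exprn_ege1 ?exprn_ge0 //; lra.
apply: le_trans (ler_wpM2r frac_ge0 (IHs isT)) _.
by rewrite [x ^+ s.+2]exprS frac_step_le.
Qed.

Lemma gauss_factor_le x n s i : 1 < x -> (i < s <= n)%N ->
  (x ^+ n - x ^+ i) / (x ^+ s - x ^+ i)
    <= x ^+ (n - s) * (x ^+ (s - i) / (x ^+ (s - i) - 1)).
Proof.
move=> x_gt1 /andP [lt_i_s le_s_n].
have xs : x ^+ s = x ^+ i * x ^+ (s - i) by rewrite -exprD subnKC // ltnW.
have xn : x ^+ n = x ^+ i * x ^+ (s - i) * x ^+ (n - s) by rewrite -xs -exprD subnKC.
have a_gt0 : 0 < x ^+ i by rewrite exprn_gt0 //; lra.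
have b_gt1 : 1 < x ^+ (s - i) by rewrite exprn_egt1 ?subn_eq0 -?ltnNge.
have c_ge0 : 0 <= x ^+ (n - s) by rewrite exprn_ge0 //; lra.
rewrite xs xn; move: (x ^+ i) (x ^+ (s - i)) (x ^+ (n - s)) a_gt0 b_gt1 c_ge0
  => a b c a_gt0 b_gt1 c_ge0.
have den_gt0 : 0 < a * b - a by nra.
rewrite ler_pdivrMr //.
have -> : c * (b / (b - 1)) * (a * b - a) = a * b * c by field; lra.
by rewrite lerBlDr lerDl ltW.
Qed.

Lemma sum_expr_le x (g : nat -> nat) a b N : 1 <= x ->
  (forall t, (a <= t < b)%N -> (g t <= N)%N) ->
  \sum_(a <= t < b) x ^+ g t <= (b - a)%:R * x ^+ N.
Proof.
move=> x_ge1 le_g_N.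
rewrite mulr_natl -sumr_const_nat !big_nat.
by apply: ler_sum => t /le_g_N; apply: ler_weXn2l.
Qed.

End GaussianBounds.

Section GaussBinom.
Variable q : nat.
Hypothesis q_gt1 : (1 < q)%N.

Lemma gauss_binomE n s : gauss_binom q n s =
  \prod_(i < s) ((q%:R ^+ n - q%:R ^+ i) / (q%:R ^+ s - q%:R ^+ i)).
Proof. by apply: eq_bigr => i _; rewrite !natrX. Qed.

Lemma gauss_binom_le n s : (s <= n)%N ->
  gauss_binom q n s <= 4 * (q%:R : rat) ^+ (s * (n - s)).
Proof.
have : 2 <= (q%:R : rat) by rewrite (ler_nat _ 2).
rewrite gauss_binomE; set x := (q%:R : rat) => x2.
case: s => [_ | s le_s_n]; first by rewrite big_ord0 mul0n expr0 mulr1 ler1n.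
apply: le_trans (_ : \prod_(i < s.+1) (x ^+ (n - s.+1) *
    (x ^+ (s.+1 - i) / (x ^+ (s.+1 - i) - 1))) <= _).
  apply: ler_prod => i _; rewrite gauss_factor_le ?ltn_ord ?le_s_n // ?andbT; last by lra.
  have lt_i_s := ltn_ord i; have x1 : 1 <= x by lra.
  by rewrite divr_ge0 // subr_ge0 ler_weXn2l // ltnW // (leq_trans lt_i_s).
rewrite big_split /= prodr_const card_ord -exprM mulnC mulrC.
apply: ler_wpM2r; first by rewrite exprn_ge0 //; lra.
rewrite (reindex_inj rev_ord_inj) /=.
under eq_bigr => i _ do rewrite (subKn (ltn_ord i)).
apply: le_trans (prod_expr_frac_le x2 (ltn0Sn s)) _.
have xs_ge1 : 1 <= x ^+ s.+1 by rewrite exprn_ege1 //; lra.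
by rewrite ler_pdivrMr; lra.
Qed.

Lemma gauss_binom_ge t s : (s <= t)%N ->
  (q%:R : rat) ^+ (s * (t - s)) <= gauss_binom q t s.
Proof.
have : 2 <= (q%:R : rat) by rewrite (ler_nat _ 2).
rewrite gauss_binomE; set x := (q%:R : rat) => x2 le_s_t.
rewrite mulnC exprM -[in X in _ ^+ X](card_ord s) -prodr_const.
apply: ler_prod => i _; have lt_i_s := ltn_ord i.
rewrite exprn_ge0 /=; last by lra.
have den_gt0 : 0 < x ^+ s - x ^+ i by rewrite subr_gt0 ltr_eXn2l //; lra.
rewrite ler_pdivlMr // mulrBr -exprD subnK // lerB //.
by rewrite ler_peMl ?exprn_ge0 ?exprn_ege1 //; lra.
Qed.

Lemma gauss_binom_gt0 t s : (s <= t)%N -> 0 < gauss_binom q t s.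
Proof.
move=> le_s_t; apply: lt_le_trans (gauss_binom_ge le_s_t).
by rewrite exprn_gt0 // ltr0n ltnW.
Qed.

Lemma gauss_binom_ratio_le n t s : (s <= t <= n)%N ->
  gauss_binom q n s / gauss_binom q t s <= 4 * (q%:R : rat) ^+ (s * (n - t)).
Proof.
move=> /andP [le_s_t le_t_n].
rewrite ler_pdivrMr ?gauss_binom_gt0 //.
apply: le_trans (gauss_binom_le (leq_trans le_s_t le_t_n)) _.
have -> : (s * (n - s) = s * (n - t) + s * (t - s))%N.
  by rewrite -mulnDr; congr (_ * _)%N; lia.
rewrite exprD mulrA ler_wpM2l ?gauss_binom_ge //.
by rewrite mulr_ge0 ?exprn_ge0 ?ler0n.
Qed.

Lemma gauss_binom_prodE n s : (s <= n)%N -> gauss_binom q n s =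
  (\prod_(i < s) (q ^ n - q ^ i))%N%:R / (\prod_(i < s) (q ^ s - q ^ i))%N%:R.
Proof.
move=> le_s_n; rewrite !natr_prod -prodf_div; apply: eq_bigr => i _.
have le_i_s : (i <= s)%N := ltnW (ltn_ord i).
have q_gt0 : (0 < q)%N := ltnW q_gt1.
rewrite !natrB ?natrX // leq_pexp2l //; exact: leq_trans le_i_s le_s_n.
Qed.

End GaussBinom.

Lemma size_sum_count (T : eqType) (l : seq T) (g : T -> nat) a b :
  {in l, forall c, a <= g c < b}%N ->
  size l = (\sum_(a <= t < b) count (fun c => g c == t) l)%N.
Proof.
move=> g_range; rewrite -sum1_size.
transitivity (\sum_(c <- l) \sum_(a <= t < b) (g c == t))%N.
  rewrite !big_seq; apply: eq_bigr => c cl.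
  rewrite -big_mkcond sum1_count (eq_count (a2 := pred1 (g c))) => [|t]; last first.
    by rewrite /= eq_sym.
  by rewrite count_uniq_mem ?iota_uniq // mem_index_iota g_range.
rewrite exchange_big; apply: eq_bigr => t _.
by elim: l {g_range} => [|c l IHl]; rewrite ?big_nil // big_cons IHl.
Qed.

Section ListDecoding.
Variables (K : finFieldType) (L : fieldExtType K) (n k : nat) (alpha : 'I_n -> L).
Hypotheses (alpha_free : free [seq alpha i | i <- enum 'I_n]) (le_k_n : (k <= n)%N).
Local Notation q := #|K|.
Local Notation d := (n - k + 1)%N.

Lemma card_codewords_in_ball (r : 'rV[L]_n) t (l : seq 'rV[L]_n) :
  uniq l -> (t < d)%N ->
  {in l, forall c, gabidulin_codeword q k alpha c /\ (rank_q (c - r) <= t)%N} ->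
  (size l)%:R <= gauss_binom q n (2 * t + 1 - d) / gauss_binom q t (2 * t + 1 - d).
Proof.
move=> uniq_l lt_t_d l_ball; set s := (2 * t + 1 - d)%N.
have q_gt1 : (1 < q)%N := card_finNzRing_gt1 K.
have le_s_t : (s <= t)%N by rewrite /s; lia.
have le_t_n : (t <= n)%N by lia.
pose U c := odflt 0 [pick V : 'M[K]_n | (coord_mx (c - r) <= V)%MS && (\rank V == t)].
have U_spec c : c \in l -> (coord_mx (c - r) <= U c)%MS /\ \rank (U c) = t.
  move=> cl; rewrite /U; case: pickP => [V /andP [? /eqP ?] // | noV].
  have [|V [sub_V rk_V]] := @exists_submx_rank _ _ _ (coord_mx (c - r)) t.
    by rewrite le_t_n andbT; case: (l_ball c cl).
  by have := noV V; rewrite sub_V rk_V eqxx.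
have U_cap : {in l &, forall c c', c != c' -> \rank (U c :&: U c')%MS < s}%N.
  move=> c c' cl c'l neq_cc'.
  have [[cw _] [cw' _]] := (l_ball c cl, l_ball c' c'l).
  have [[sub rk] [sub' rk']] := (U_spec c cl, U_spec c' c'l).
  have : (coord_mx (c - c') <= U c + U c')%MS.
    have -> : c - c' = (c - r) - (c' - r) by rewrite opprB addrA subrK.
    by rewrite coord_mxB addmx_sub_adds // eqmx_opp.
  move/mxrankS; have := mxrank_sum_cap (U c) (U c').
  have := gabidulin_rank_dist alpha_free le_k_n cw cw' neq_cc'.
  rewrite /rank_q -/(coord_mx _) rk rk' /s; lia.
have le_s_t_n : (s <= t <= n)%N by apply/andP.
have := subspace_packing uniq_l le_s_t_n (fun c cl => (U_spec c cl).2) U_cap.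
have prod_gt0 m : (s <= m)%N -> (0 < \prod_(i < s) (q ^ m - q ^ i))%N.
  move=> le_s_m; apply/prodn_gt0 => i.
  by rewrite subn_gt0 ltn_exp2l // (leq_trans (ltn_ord i)).
rewrite -(ler_nat rat) natrM !gauss_binom_prodE ?(leq_trans le_s_t) // => packing.
rewrite invf_div mulrA divfK ?pnatr_eq0 -?lt0n ?prod_gt0 //.
by rewrite ler_pdivlMr ?ltr0n ?prod_gt0.
Qed.

End ListDecoding.

Unset Implicit Arguments.

Theorem theorem2 (K : finFieldType) (L : fieldExtType K) (q n k tau : nat)
  (alpha : 'I_n -> L) :
  #|K| = q ->
  (n <= \dim {:L})%N ->
  free [seq alpha i | i <- enum 'I_n] ->
  (k <= n)%N ->
  let d := (n - k + 1)%N in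
  let e := (d.-1./2)%N in
  (tau < d)%N ->
  (e < tau)%N ->
  forall (r : 'rV[L]_n) (s : seq 'rV[L]_n),
    uniq s ->
    (forall c, c \in s ->
       gabidulin_codeword q k alpha c /\ (rank_q (c - r) <= tau)%N) ->
    let S1 : rat := \sum_(e.+1 <= t < tau.+1)
        gauss_binom q n (2 * t + 1 - d) / gauss_binom q t (2 * t + 1 - d) in
    let S2 : rat := \sum_(e.+1 <= t < tau.+1)
        (q%:R) ^+ ((2 * t + 1 - d) * (n - t)) in
    [/\ (size s)%:R <= S1,
        S1 <= 4 * S2
      & 4 * S2 <= 4 * (tau - e)%N%:R
                    * (q%:R) ^+ ((2 * tau + 1 - d) * (n - e - 1))].
Proof.
move=> <- _ alpha_free le_k_n d e lt_tau_d lt_e_tau r s uniq_s s_ball S1 S2.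
have q_gt1 : (1 < #|K|)%N := card_finNzRing_gt1 K.
split.
- pose g c := maxn (rank_q (c - r)) e.+1.
  rewrite (@size_sum_count _ s g e.+1 tau.+1); last first.
    move=> c cs; rewrite leq_maxr ltnS geq_max (s_ball c cs).2; exact: lt_e_tau.
  rewrite natr_sum /S1 !big_nat; apply: ler_sum => t /andP [lt_e_t le_t_tau].
  rewrite -size_filter; apply: (card_codewords_in_ball alpha_free le_k_n (r := r)).
  + exact: filter_uniq.
  + by rewrite /d in lt_tau_d; lia.
  + move=> c; rewrite mem_filter => /andP [/eqP g_c cs].
    by split; [case: (s_ball c cs) | rewrite -g_c /g leq_maxl].
- rewrite /S1 /S2 mulr_sumr !big_nat; apply: ler_sum => t /andP [lt_e_t lt_t_tau].
  apply: gauss_binom_ratio_le => //; rewrite /d /e in lt_e_t lt_tau_d *; lia.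
- rewrite -mulrA ler_wpM2l // -subSS; apply: sum_expr_le; first by rewrite ler1n ltnW.
  move=> t /andP [lt_e_t lt_t_tau]; apply: leq_mul; lia.
Qed.
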